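(* Let $(G,\cdot)$ be a WIPL with identity $e$, let $(H,\circ)$ be a WIPL with identity $e'$, and let $(A,B,C)$ be an isotopism from $(G,\cdot)$ to $(H,\circ)$. Put $a=e'A^{-1}$ and $b=e'B^{-1}$. Then $C$ is an isomorphism from $(G,\cdot)$ onto $(H,\circ)$ if and only if $(J_\rho L_b J_\lambda,\ J_\lambda R_a J_\rho,\ I)\in AUT(G,\cdot)$. Moreover, when these equivalent conditions hold, $(J_\lambda R_a J_\rho,\ J_\rho L_b J_\lambda,\ R_aL_b)\in AUT(G,\cdot)$, and if in addition $x\cdot x=e$ for all $x\in G$, then $(R_a,L_b,R_aL_b)\in AUT(G,\cdot)$.
   Context: Maps are written on the right of their arguments ($xU$) and composed left to right: $UV$ means first apply $U$, then $V$; $I$ is the identity map. For a loop $(L,\cdot)$ with identity $e$, $x^\rho$ and $x^\lambda$ denote the right and left inverses of $x$ ($x x^\rho=e=x^\lambda x$), and $J_\rho:x\mapsto x^\rho$, $J_\lambda:x\mapsto x^\lambda$, $L_x:y\mapsto xy$, $R_x:y\mapsto yx$ (so $J_\lambda=J_\rho^{-1}$). $L$ is a weak inverse property loop (WIPL) if $xy\cdot z=e$ implies $x\cdot yz=e$ for all $x,y,z\in L$. A triple $(U,V,W)$ of bijections $G\to H$ between loops $(G,\cdot)$ and $(H,\circ)$ is an isotopism if $xU\circ yV=(x\cdot y)W$ for all $x,y\in G$; an autotopism of $G$ is an isotopism from $G$ to itself, and $AUT(G,\cdot)$ denotes the group of autotopisms under componentwise composition. *)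

From Stdlib Require Import ClassicalEpsilon.
From Corelib Require Import ssreflect ssrfun.

Set Implicit Arguments.

(* Maps are written on the right in the paper and composed left to right;
   here a map xU is the Rocq function application U x, and a composite
   UV (first U, then V) is fun x => V (U x). *)

Record is_loop (T : Type) (op : T -> T -> T) (e : T) : Prop := {
  loop_idl : forall x, op e x = x;
  loop_idr : forall x, op x e = x;
  loop_ldiv : forall a b, exists! x, op a x = b;
  loop_rdiv : forall a b, exists! y, op y a = b
}.

Definition is_WIPL (T : Type) (op : T -> T -> T) (e : T) : Prop :=
  is_loop op e /\ (forall x y z, op (op x y) z = e -> op x (op y z) = e).

(* x^rho: the right inverse, x x^rho = e;  x^lambda: the left inverse, x^lambda x = e. *)
Definition rinv (T : Type) (op : T -> T -> T) (e : T) (x : T) : T :=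
  epsilon (inhabits e) (fun y => op x y = e).
Definition linv (T : Type) (op : T -> T -> T) (e : T) (x : T) : T :=
  epsilon (inhabits e) (fun y => op y x = e).

Definition is_isotopism (G H : Type) (op1 : G -> G -> G) (op2 : H -> H -> H)
  (U V W : G -> H) : Prop :=
  bijective U /\ bijective V /\ bijective W /\
  (forall x y, op2 (U x) (V y) = W (op1 x y)).

Definition is_autotopism (G : Type) (op : G -> G -> G) (U V W : G -> G) : Prop :=
  is_isotopism op op U V W.

Definition is_isomorphism (G H : Type) (op1 : G -> G -> G) (op2 : H -> H -> H)
  (C : G -> H) : Prop :=
  bijective C /\ (forall x y, C (op1 x y) = op2 (C x) (C y)).

From Stdlib Require Import ClassicalEpsilon.
From Corelib Require Import ssreflect ssrfun.

(* Write U := J_rho L_b J_lambda and V := J_lambda R_a J_rho.  In any WIPL,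
   U is the inverse of R_b and V the inverse of L_a; hence (U, V, I) is an
   autotopism exactly when (xb)(ay) = xy for all x, y.  On the other hand,
   since A = R_b C and B = L_a C (the identity of H being xA o bB = (xb)C),
   C is an isomorphism exactly when (xb)(ay) = xy as well: this proves the
   equivalence.
   For the second claim we use two "rotations" valid in every WIPL:
   (U, V, W) in AUT implies (V, J_lambda W J_rho, J_lambda U J_rho) in AUT
   and (J_rho W J_lambda, U, J_rho V J_lambda) in AUT.  Rotating (U, V, I)
   both ways gives (V, I, L_b) and (I, U, R_a); their composite
   (I, U, R_a)(V, I, L_b) = (V, U, R_a L_b) is the required autotopism.
   Finally, if x x = e for all x then J_rho = J_lambda = I, and the same
   autotopism reads (R_a, L_b, R_a L_b). *)

Lemma autotopism_comp (G : Type) (op : G -> G -> G) (U1 V1 W1 U2 V2 W2 : G -> G) :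
  is_autotopism op U1 V1 W1 -> is_autotopism op U2 V2 W2 ->
  is_autotopism op (U2 \o U1) (V2 \o V1) (W2 \o W1).
Proof.
move=> [bU1 [bV1 [bW1 h1]]] [bU2 [bV2 [bW2 h2]]].
split; [exact: bij_comp | split; [exact: bij_comp | split; first exact: bij_comp]].
by move=> x y /=; rewrite h2 h1.
Qed.

Lemma autotopism_ext (G : Type) (op : G -> G -> G) (U V W U' V' W' : G -> G) :
  is_autotopism op U V W -> U =1 U' -> V =1 V' -> W =1 W' ->
  is_autotopism op U' V' W'.
Proof.
move=> [bU [bV [bW h]]] eU eV eW.
split; [exact: eq_bij eU | split; [exact: eq_bij eV | split; first exact: eq_bij eW]].
by move=> x y; rewrite -eU -eV -eW.
Qed.

(* An isotopism (A, B, C) with aA = e' and bB = e' is of the form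
   (R_b C, L_a C, C); so C is an isomorphism iff (xb)(ay) = xy. *)
Lemma isomorphism_iff_principal {G H : Type} {mul : G -> G -> G}
    {circ : H -> H -> H} {e' : H} {A B C : G -> H} {a b : G} :
  is_loop circ e' -> is_isotopism mul circ A B C -> A a = e' -> B b = e' ->
  is_isomorphism mul circ C <-> forall x y, mul (mul x b) (mul a y) = mul x y.
Proof.
move=> LH [[Ai _ AiK] [[Bi _ BiK] [bC hC]]] ha hb.
have hA x : A x = C (mul x b) by rewrite -hC hb (loop_idr LH).
have hB y : B y = C (mul a y) by rewrite -hC ha (loop_idl LH).
have C_inj : injective C by apply: bij_inj.
split.
- move=> [_ hiso] x y; apply: C_inj.
  by rewrite hiso -hA -hB hC.
- move=> hxy; split=> // p q.
  (* Write p = p' b and q = a q' with p' = (pC)A^{-1}, q' = (qC)B^{-1}. *)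
  have -> : C p = A (Ai (C p)) by rewrite AiK.
  have -> : C q = B (Bi (C q)) by rewrite BiK.
  rewrite hC; congr C.
  have {1}-> : p = mul (Ai (C p)) b by apply: C_inj; rewrite -hA AiK.
  have {1}-> : q = mul a (Bi (C q)) by apply: C_inj; rewrite -hB BiK.
  exact: hxy.
Qed.

Section WeakInverseProperty.

Context {G : Type} {mul : G -> G -> G} {e : G} (hG : is_WIPL mul e).

Local Notation "x * y" := (mul x y).
Local Notation ri := (rinv mul e).
Local Notation li := (linv mul e).

Lemma mul_cancel_l a x y : a * x = a * y -> x = y.
Proof.
move=> h; case: (loop_ldiv (proj1 hG) a (a * y)) => z [_ hz].
by rewrite -(hz x h) -(hz y erefl).
Qed.

Lemma mul_cancel_r a x y : x * a = y * a -> x = y.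
Proof.
move=> h; case: (loop_rdiv (proj1 hG) a (y * a)) => z [_ hz].
by rewrite -(hz x h) -(hz y erefl).
Qed.

Lemma mul_rinv x : x * ri x = e.
Proof.
apply: (epsilon_spec (inhabits e) (fun y => x * y = e)).
by case: (loop_ldiv (proj1 hG) x e) => z [hz _]; exists z.
Qed.

Lemma linv_mul x : li x * x = e.
Proof.
apply: (epsilon_spec (inhabits e) (fun y => y * x = e)).
by case: (loop_rdiv (proj1 hG) x e) => z [hz _]; exists z.
Qed.

Lemma rinv_unique x y : x * y = e -> ri x = y.
Proof. by move=> h; apply: (mul_cancel_l x); rewrite mul_rinv h. Qed.

Lemma linv_unique x y : y * x = e -> li x = y.
Proof. by move=> h; apply: (mul_cancel_r x); rewrite linv_mul h. Qed.

Lemma linvK x : li (ri x) = x.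
Proof. exact/linv_unique/mul_rinv. Qed.

Lemma rinvK x : ri (li x) = x.
Proof. exact/rinv_unique/linv_mul. Qed.

Lemma rinv_bij : bijective ri.
Proof. exact: (Bijective linvK rinvK). Qed.

Lemma linv_bij : bijective li.
Proof. exact: (Bijective rinvK linvK). Qed.

Lemma wip_assoc x y z : (x * y) * z = e -> x * (y * z) = e.
Proof. exact: (proj2 hG). Qed.

Lemma mul_rinv_mul p q : q * ri (p * q) = ri p.
Proof. by symmetry; apply/rinv_unique/wip_assoc/mul_rinv. Qed.

Lemma wip_assoc_sym x y z : x * (y * z) = e -> (x * y) * z = e.
Proof.
move=> h.
have yz : y * z = ri x by symmetry; apply: rinv_unique.
have -> : z = ri (x * y) by apply: (mul_cancel_l y); rewrite mul_rinv_mul yz.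
exact: mul_rinv.
Qed.

Lemma linv_mul_mul p q : li (p * q) * p = li q.
Proof. by symmetry; apply/linv_unique/wip_assoc_sym/linv_mul. Qed.

Lemma linv_lmul_rinvK b x : li (b * ri x) * b = x.
Proof. by rewrite linv_mul_mul linvK. Qed.

Lemma linv_lmul_rinv_rmul b x : li (b * ri (x * b)) = x.
Proof. by apply: (mul_cancel_r b); rewrite linv_lmul_rinvK. Qed.

Lemma lmul_rinv_rmul_linvK a y : a * ri (li y * a) = y.
Proof. by rewrite mul_rinv_mul rinvK. Qed.

Lemma rinv_rmul_linv_lmul a y : ri (li (a * y) * a) = y.
Proof. by apply: (mul_cancel_l a); rewrite lmul_rinv_rmul_linvK. Qed.

Lemma autotopism_principal_iff a b :
  is_autotopism mul (fun x => li (b * ri x)) (fun x => ri (li x * a)) id <->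
  forall x y, (x * b) * (a * y) = x * y.
Proof.
split.
- move=> [_ [_ [_ hT]]] x y.
  by rewrite -[in RHS](linv_lmul_rinv_rmul b x) -[in RHS](rinv_rmul_linv_lmul a y).
- move=> hxy; split.
    by exists (fun x => x * b) => x; [apply: linv_lmul_rinvK | apply: linv_lmul_rinv_rmul].
  split.
    by exists (fun y => a * y) => y; [apply: lmul_rinv_rmul_linvK | apply: rinv_rmul_linv_lmul].
  split; first by exists id.
  by move=> x y; rewrite -hxy linv_lmul_rinvK lmul_rinv_rmul_linvK.
Qed.

Lemma autotopism_rotr {U V W : G -> G} :
  is_autotopism mul U V W ->
  is_autotopism mul V (fun z => ri (W (li z))) (fun z => ri (U (li z))).
Proof.
move=> [bU [bV [bW hT]]].
split=> //; split; first exact: (bij_comp rinv_bij (bij_comp bW linv_bij)).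
split; first exact: (bij_comp rinv_bij (bij_comp bU linv_bij)).
move=> y z; set x := li (y * z).
have -> : li z = x * y by apply/linv_unique/wip_assoc_sym/linv_mul.
by rewrite -hT mul_rinv_mul.
Qed.

Lemma autotopism_rotl {U V W : G -> G} :
  is_autotopism mul U V W ->
  is_autotopism mul (fun x => li (W (ri x))) U (fun x => li (V (ri x))).
Proof.
move=> [bU [bV [bW hT]]].
split; first exact: (bij_comp linv_bij (bij_comp bW rinv_bij)).
split=> //; split; first exact: (bij_comp linv_bij (bij_comp bV rinv_bij)).
move=> x z; set y := ri (x * z).
have -> : ri x = z * y by apply/rinv_unique/wip_assoc/mul_rinv.
by rewrite -hT linv_mul_mul.
Qed.

Lemma autotopism_principal_swap a b :
  is_autotopism mul (fun x => li (b * ri x)) (fun x => ri (li x * a)) id ->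
  is_autotopism mul (fun x => ri (li x * a)) (fun x => li (b * ri x))
    (fun x => b * (x * a)).
Proof.
move=> hT.
have hLb : is_autotopism mul (fun x => ri (li x * a)) id (fun x => b * x).
  apply: autotopism_ext (autotopism_rotr hT) _ _ _ => // z.
    exact: rinvK.
  by rewrite /= !rinvK.
have hRa : is_autotopism mul id (fun x => li (b * ri x)) (fun x => x * a).
  apply: autotopism_ext (autotopism_rotl hT) _ _ _ => // z.
    exact: linvK.
  by rewrite /= !linvK.
exact: autotopism_comp hRa hLb.
Qed.

Lemma rinv_involutory x : (forall y, y * y = e) -> ri x = x.
Proof. by move=> hsq; apply: rinv_unique. Qed.

Lemma linv_involutory x : (forall y, y * y = e) -> li x = x.
Proof. by move=> hsq; apply: linv_unique. Qed.

End WeakInverseProperty.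

Theorem mainTheorem2 (G H : Type) (mul : G -> G -> G) (e : G)
  (circ : H -> H -> H) (e' : H)
  (hG : is_WIPL mul e) (hH : is_WIPL circ e')
  (A B C : G -> H) (hABC : is_isotopism mul circ A B C)
  (a b : G) (ha : A a = e') (hb : B b = e') :
  (is_isomorphism mul circ C <->
     is_autotopism mul
       (fun x => linv mul e (mul b (rinv mul e x)))      (* J_rho L_b J_lambda *)
       (fun x => rinv mul e (mul (linv mul e x) a))      (* J_lambda R_a J_rho *)
       (fun x => x))                                     (* I *)
  /\ (is_isomorphism mul circ C ->
      is_autotopism mul
        (fun x => rinv mul e (mul (linv mul e x) a))     (* J_lambda R_a J_rho *)
        (fun x => linv mul e (mul b (rinv mul e x)))     (* J_rho L_b J_lambda *)
        (fun x => mul b (mul x a)))                      (* R_a L_b *)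
  /\ (is_isomorphism mul circ C -> (forall x, mul x x = e) ->
      is_autotopism mul
        (fun x => mul x a)                               (* R_a *)
        (fun x => mul b x)                               (* L_b *)
        (fun x => mul b (mul x a))).                     (* R_a L_b *)
Proof.
(* T1 := (J_rho L_b J_lambda, J_lambda R_a J_rho, I); both sides of the
   equivalence say (xb)(ay) = xy. *)
have iso_iff_T1 := iff_trans
  (isomorphism_iff_principal (proj1 hH) hABC ha hb)
  (iff_sym (autotopism_principal_iff hG a b)).
have iso_T2 hiso := autotopism_principal_swap hG a b (proj1 iso_iff_T1 hiso).
split; [exact: iso_iff_T1 | split; first exact: iso_T2].
move=> hiso hsq; apply: autotopism_ext (iso_T2 hiso) _ _ _ => // x /=.
- by rewrite linv_involutory ?rinv_involutory.
- by rewrite rinv_involutory ?linv_involutory.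
Qed.
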